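(* Let $R$ be a semiprime left Goldie ring, let $\mathcal{C}$ be the set of regular elements of $R$, write its classical left quotient ring as $Q_{l,cl}(R)=\prod_{i=1}^nQ_i$ with $Q_1,\ldots,Q_n$ simple Artinian rings, and let $\sigma:R\to Q_{l,cl}(R)$, $r\mapsto\frac{r}{1}$. Then: (1) $\mathcal{C}\subseteq S$ for all $S\in\max\mathrm{Den}_l(R)$; (2) $\max\mathrm{Den}_l(R)=\{S_1,\ldots,S_n\}$ and $\max\mathrm{Den}_l(Q_{l,cl}(R))=\{S_1',\ldots,S_n'\}$, where $S_i':=Q_1\times\cdots\times Q_i^*\times\cdots\times Q_n$ ($Q_i^*$ the group of units of $Q_i$, in the $i$-th place) and $S_i:=\sigma^{-1}(S_i')$; the map $\max\mathrm{Den}_l(R)\to\max\mathrm{Den}_l(Q_{l,cl}(R))$, $S\mapsto\widetilde{S}$, is a bijection with inverse $\mathcal{T}\mapsto\sigma^{-1}(\mathcal{T})$, where $\widetilde{S}$ is the multiplicative monoid generated in $Q_{l,cl}(R)$ by $\sigma(S)$ and $\{c^{-1}:c\in\mathcal{C}\}$; (3) $S_i^{-1}R\cong Q_i$ for $i=1,\ldots,n$.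
   Context: All rings are associative with $1$. A multiplicative subset $S$ of $R$ ($1\in S$, $0\notin S$, closed under multiplication) is a left Ore set if $Sr\cap Rs\neq\emptyset$ for all $r\in R$, $s\in S$. A left Ore set $S$ is a left denominator set if $rs=0$ ($r\in R$, $s\in S$) implies $tr=0$ for some $t\in S$; $S^{-1}R$ is the left localization. $\max\mathrm{Den}_l(R)$ is the set of maximal elements, under inclusion, of the set of left denominator sets of $R$. The classical left quotient ring is $Q_{l,cl}(R):=\mathcal{C}^{-1}R$ (which exists and is semisimple Artinian for semiprime left Goldie $R$ by Goldie's theorem). *)

(* Rings are possibly non-commutative, associative with 1
   (pzRingType: the zero ring is allowed). Subsets are Prop-valued predicates. *)
From mathcomp Require Import all_boot all_algebra.
Set Implicit Arguments. Unset Strict Implicit. Unset Printing Implicit Defensive.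
Import GRing.Theory.
Local Open Scope ring_scope.

Section RingNotions.
Variable R : pzRingType.

Definition is_unit (x : R) : Prop := exists y : R, x * y = 1 /\ y * x = 1.

Definition regular (c : R) : Prop :=
  (forall r : R, c * r = 0 -> r = 0) /\ (forall r : R, r * c = 0 -> r = 0).

Definition mult_subset (S : R -> Prop) : Prop :=
  S 1 /\ ~ S 0 /\ (forall a b, S a -> S b -> S (a * b)).

Definition left_Ore (S : R -> Prop) : Prop :=
  mult_subset S /\
  forall r s : R, S s -> exists s' r' : R, S s' /\ s' * r = r' * s.

Definition left_den (S : R -> Prop) : Prop :=
  left_Ore S /\
  forall r s : R, S s -> r * s = 0 -> exists t : R, S t /\ t * r = 0.

Definition maxDen_l (S : R -> Prop) : Prop :=
  left_den S /\
  forall T : R -> Prop, left_den T -> (forall x, S x -> T x) -> forall x, T x -> S x.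

Definition same_subset (A B : R -> Prop) : Prop := forall x, A x <-> B x.

Definition left_ideal (I : R -> Prop) : Prop :=
  I 0 /\ (forall a b, I a -> I b -> I (a - b)) /\ (forall r a, I a -> I (r * a)).

Definition ideal (I : R -> Prop) : Prop :=
  left_ideal I /\ (forall r a, I a -> I (a * r)).

Definition semiprime : Prop :=
  forall I : R -> Prop, ideal I -> (forall a b, I a -> I b -> a * b = 0) ->
  forall a, I a -> a = 0.

Definition left_ann (X : R -> Prop) : R -> Prop :=
  fun r => forall x, X x -> r * x = 0.

Definition acc_left_ann : Prop :=
  forall X : nat -> R -> Prop,
  (forall m x, left_ann (X m) x -> left_ann (X m.+1) x) ->
  exists N, forall m, (N <= m)%N -> same_subset (left_ann (X m)) (left_ann (X N)).

(* finite left uniform dimension: no infinite direct sum of nonzero left ideals *)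
Definition finite_left_udim : Prop :=
  ~ exists I : nat -> R -> Prop,
      (forall j, left_ideal (I j)) /\
      (forall j, exists a, I j a /\ a <> 0) /\
      (forall (k : nat) (a : nat -> R), (forall j, I j (a j)) ->
         \sum_(j < k) a j = 0 -> forall j, (j < k)%N -> a j = 0).

Definition left_Goldie : Prop := acc_left_ann /\ finite_left_udim.

Definition simple_ring : Prop :=
  (1 : R) <> 0 /\
  forall I : R -> Prop, ideal I -> (forall a, I a -> a = 0) \/ (forall a, I a).

Definition left_Artinian : Prop :=
  forall I : nat -> R -> Prop, (forall m, left_ideal (I m)) ->
  (forall m x, I m.+1 x -> I m x) ->
  exists N, forall m, (N <= m)%N -> same_subset (I m) (I N).

Definition simple_Artinian : Prop := simple_ring /\ left_Artinian.

End RingNotions.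

(* f : R -> L is a left ring of fractions of R w.r.t. S, i.e. L "is" S^{-1}R
   (with f r = r/1): standard characterization of the left localization. *)
Definition is_left_localization (R L : pzRingType) (S : R -> Prop)
  (f : {rmorphism R -> L}) : Prop :=
  (forall s, S s -> is_unit (f s)) /\
  (forall q : L, exists s r : R, S s /\ f s * q = f r) /\
  (forall r : R, f r = 0 <-> exists s, S s /\ s * r = 0).

Definition is_classical_left_quotient (R Q : pzRingType)
  (sigma : {rmorphism R -> Q}) : Prop :=
  is_left_localization (@regular R) sigma.

Definition ring_iso_prod (Q : pzRingType) (n : nat) (Qi : 'I_n -> pzRingType)
  (phi : Q -> forall i, Qi i) : Prop :=
  (forall a b i, phi (a + b) i = phi a i + phi b i) /\
  (forall a b i, phi (a * b) i = phi a i * phi b i) /\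
  (forall i, phi 1 i = 1) /\
  (forall a b, (forall i, phi a i = phi b i) -> a = b) /\
  (forall g : forall i, Qi i, exists a, forall i, phi a i = g i).

Inductive gen_monoid (Q : pzRingType) (X : Q -> Prop) : Q -> Prop :=
  | gm_one : gen_monoid X 1
  | gm_mul : forall x y, X x -> gen_monoid X y -> gen_monoid X (x * y).

Definition tilde (R Q : pzRingType) (sigma : {rmorphism R -> Q}) (S : R -> Prop)
  : Q -> Prop :=
  gen_monoid (fun q => (exists s, S s /\ q = sigma s) \/
                       (exists c, regular c /\ q * sigma c = 1 /\ sigma c * q = 1)).

Definition preimage_of (R Q : pzRingType) (sigma : {rmorphism R -> Q}) (T : Q -> Prop)
  : R -> Prop := fun r => T (sigma r).

From HB Require Import structures.
From mathcomp Require Import all_boot all_algebra.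
From Stdlib Require Import Classical.
Set Implicit Arguments. Unset Strict Implicit. Unset Printing Implicit Defensive.
Import GRing.Theory.
Local Open Scope ring_scope.

(* The semiprime Goldie hypotheses only serve to provide Q, which is given here.
   Through Q = prod_i Q_i, questions about a single component reduce to the
   simple Artinian factor Q_i: an element of R whose i-th component vanishes is
   killed on the left by an element of S_i (use a fraction of the i-th central
   idempotent), which makes S_i a left denominator set.  Conversely, let T be a
   left denominator set.  If every component were annihilated by some element
   of T, their product would put 0 in T; so there is an i such that no element
   of T vanishes in Q_i.  The elements of Q_i killed on the left by the image of
   T, after clearing denominators, form a two-sided ideal not containing 1,
   hence zero: the image of T is left regular, the denominator condition makes
   it right regular, and in the Artinian ring Q_i it consists of units.  So
   T ⊆ S_i, and the pairwise incomparable S_i are the maximal ones.  The same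
   argument applies to Q itself, with trivial denominators. *)

Section Units.
Variable B : pzRingType.

Lemma is_unit1 : is_unit (1 : B).
Proof. by exists 1; rewrite mulr1. Qed.

Lemma is_unitM (a b : B) : is_unit a -> is_unit b -> is_unit (a * b).
Proof.
move=> [x [ax xa]] [y [bY yb]]; exists (y * x); split.
  by rewrite mulrA -(mulrA a) bY mulr1.
by rewrite mulrA -(mulrA y) xa mulr1.
Qed.

Lemma is_unit_lreg (a x : B) : is_unit a -> a * x = 0 -> x = 0.
Proof. by move=> [y [_ ya]] ax0; rewrite -[x]mul1r -ya -mulrA ax0 mulr0. Qed.

Lemma is_unit_rreg (a x : B) : is_unit a -> x * a = 0 -> x = 0.
Proof. by move=> [y [ay _]] xa0; rewrite -[x]mulr1 -ay mulrA xa0 mul0r. Qed.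

Lemma not_is_unit0 : (1 : B) <> 0 -> ~ is_unit (0 : B).
Proof. by move=> nz [y [y0 _]]; apply: nz; rewrite -y0 mul0r. Qed.

Lemma regular1 : regular (1 : B).
Proof. by split=> r; rewrite ?mul1r ?mulr1. Qed.

Lemma regularM (a b : B) : regular a -> regular b -> regular (a * b).
Proof.
move=> [al ar] [bl br]; split=> r.
  by rewrite -mulrA => /al /bl.
by rewrite mulrA => /br /ar.
Qed.

Lemma left_den_same (U V : B -> Prop) : same_subset U V -> left_den U -> left_den V.
Proof.
move=> UV [[[U1 [U0 UM]] UO] UD]; split; first split; first split.
- exact/UV.
- by split; [move/UV|move=> a b /UV Ua /UV Ub; apply/UV; apply: UM].
- move=> r s /UV /(UO r) [s' [r' [Us' e]]]; exists s', r'; split=> //; exact/UV.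
- move=> r s /UV Us /(UD r s Us) [t [Ut e]]; exists t; split=> //; exact/UV.
Qed.

Lemma rreg_expr (x r : B) k :
  (forall r, r * x = 0 -> r = 0) -> r * x ^+ k = 0 -> r = 0.
Proof.
move=> x_rreg; elim: k r => [|k IHk] r; first by rewrite expr0 mulr1.
by rewrite exprSr mulrA => /x_rreg /IHk.
Qed.

(* The chain of left ideals B x^m becomes stationary: x^N = y x^(N+1). *)
Lemma left_Artinian_rreg_unit (x : B) :
  left_Artinian B -> (forall r, r * x = 0 -> r = 0) -> is_unit x.
Proof.
move=> B_art x_rreg.
pose I m := fun y : B => exists z, y = z * x ^+ m.
have [|m y [z ->]|N IN] := B_art I.
- move=> m; split; first by exists 0; rewrite mul0r.
  split; first by move=> a b [za ->] [zb ->]; exists (za - zb); rewrite mulrBl.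
  by move=> r a [z ->]; exists (r * z); rewrite mulrA.
- by exists (z * x); rewrite exprS mulrA.
have [y xN] : I N.+1 (x ^+ N) by apply/(IN N.+1 (leqnSn N)); exists 1; rewrite mul1r.
have yx : y * x = 1.
  have : (1 - y * x) * x ^+ N = 0 by rewrite mulrBl mul1r -mulrA -exprS -xN subrr.
  by move/rreg_expr => /(_ x_rreg) /eqP; rewrite subr_eq0 => /eqP.
exists y; split=> //; apply/eqP; rewrite -subr_eq0; apply/eqP; apply: x_rreg.
by rewrite mulrBl mul1r -mulrA yx mulr1 subrr.
Qed.

End Units.

Section ProductDecomposition.
Variables (Q : pzRingType) (n : nat) (Qi : 'I_n -> pzRingType).
Variables (phi : Q -> forall i, Qi i) (Hphi : ring_iso_prod phi).

Lemma phiD a b i : phi (a + b) i = phi a i + phi b i.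
Proof. by case: Hphi. Qed.

Lemma phiM a b i : phi (a * b) i = phi a i * phi b i.
Proof. by case: Hphi => _ []. Qed.

Lemma phi1 i : phi 1 i = 1.
Proof. by case: Hphi => _ [_ []]. Qed.

Lemma phi_inj a b : (forall i, phi a i = phi b i) -> a = b.
Proof. by case: Hphi => _ [_ [_ [inj _]]]; apply: inj. Qed.

Lemma phi_surj (g : forall i, Qi i) : exists a, forall i, phi a i = g i.
Proof. by case: Hphi => _ [_ [_ [_ surj]]]; apply: surj. Qed.

Lemma phiB a b i : phi (a - b) i = phi a i - phi b i.
Proof. by rewrite -{2}(subrK b a) (phiD (a - b)) addrK. Qed.

Lemma phi0 i : phi 0 i = 0.
Proof. by rewrite -(subrr 0) phiB subrr. Qed.

Lemma phi_eq0 q : (forall i, phi q i = 0) -> q = 0.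
Proof. by move=> q0; apply: phi_inj => i; rewrite q0 phi0. Qed.

Lemma phi_unit q i : is_unit q -> is_unit (phi q i).
Proof. by move=> [y [qy yq]]; exists (phi y i); rewrite -!phiM qy yq phi1. Qed.

Lemma phi_surj_at i (x : Qi i) :
  exists q, phi q i = x /\ forall j, j != i -> phi q j = 0.
Proof.
pose g j : Qi j := if i =P j is ReflectT e then eq_rect i Qi x j e else 0.
have [q qg] := phi_surj g; exists q; split=> [|j ji]; rewrite qg /g.
  by case: (i =P i) => // e; rewrite (eq_axiomK e).
by case: (i =P j) => // e; case/eqP: ji.
Qed.

End ProductDecomposition.

Section Projection.
Variables (Q : pzRingType) (n : nat) (Qi : 'I_n -> pzRingType).
Variables (phi : Q -> forall i, Qi i) (Hphi : ring_iso_prod phi) (i : 'I_n).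

(* The otherwise unused proof argument lets the instances below be canonical. *)
Definition proj_at (_ : ring_iso_prod phi) (j : 'I_n) (q : Q) : Qi j := phi q j.

Fact proj_at_is_zmod_morphism : zmod_morphism (proj_at Hphi i).
Proof. by move=> a b; apply: phiB. Qed.

Fact proj_at_is_monoid_morphism : monoid_morphism (proj_at Hphi i).
Proof. by split=> [|a b]; [apply: phi1 | apply: phiM]. Qed.

HB.instance Definition _ :=
  GRing.isZmodMorphism.Build Q (Qi i) (proj_at Hphi i) proj_at_is_zmod_morphism.
HB.instance Definition _ :=
  GRing.isMonoidMorphism.Build Q (Qi i) (proj_at Hphi i) proj_at_is_monoid_morphism.

End Projection.

Section FractionsInProduct.
Variables (Q : pzRingType) (n : nat) (Qi : 'I_n -> pzRingType).
Variables (phi : Q -> forall i, Qi i) (Hphi : ring_iso_prod phi).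
Hypothesis Qi_simple_Artinian : forall i, simple_Artinian (Qi i).
Variables (A : pzRingType) (s : {rmorphism A -> Q}) (D : A -> Prop).
Hypothesis D1 : D 1.
Hypothesis DM : forall a b, D a -> D b -> D (a * b).
Hypothesis D_unit : forall c, D c -> is_unit (s c).
Hypothesis s_frac : forall q, exists c a, D c /\ s c * q = s a.
Hypothesis s_inj : forall a, s a = 0 -> a = 0.

Definition comp_at i : {rmorphism A -> Qi i} := proj_at Hphi i \o s.

Definition unit_at i (a : A) : Prop := is_unit (comp_at i a).

Lemma comp_atE i a : comp_at i a = phi (s a) i.
Proof. by []. Qed.

Lemma comp_at_D i c : D c -> is_unit (comp_at i c).
Proof. by move/D_unit/(phi_unit Hphi). Qed.

Lemma comp_at_frac i (x : Qi i) : exists c a, D c /\ comp_at i c * x = comp_at i a.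
Proof.
have [q [qx _]] := phi_surj_at Hphi x.
have [c [a [Dc e]]] := s_frac q.
by exists c, a; split=> //; rewrite !comp_atE -e (phiM Hphi) qx.
Qed.

Lemma comp_at_eq0 a : (forall i, comp_at i a = 0) -> a = 0.
Proof. by move=> a0; apply: s_inj; apply: (phi_eq0 Hphi). Qed.

Lemma unit_at_support i : exists b, unit_at i b /\ forall j, j != i -> comp_at j b = 0.
Proof.
have [e [e1 e0]] := phi_surj_at Hphi (1 : Qi i).
have [c [b [Dc cb]]] := s_frac e.
exists b; split=> [|j ji]; rewrite ?/unit_at comp_atE -cb (phiM Hphi).
  by rewrite e1 mulr1; apply: (comp_at_D i Dc).
by rewrite e0 // mulr0.
Qed.

Lemma comp_at_ker i r : comp_at i r = 0 -> exists b, unit_at i b /\ b * r = 0.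
Proof.
move=> r0; have [b [ub b0]] := unit_at_support i.
exists b; split=> //; apply: comp_at_eq0 => j; rewrite rmorphM.
by case: (eqVneq j i) => [->|/b0->]; rewrite ?r0 ?mulr0 ?mul0r.
Qed.

Lemma unit_at_den i : left_den (unit_at i).
Proof.
have Qi_nz : (1 : Qi i) <> 0 by case: (Qi_simple_Artinian i) => [[]].
split; first split; first split.
- by rewrite /unit_at rmorph1; apply: is_unit1.
- split; first by rewrite /unit_at rmorph0; exact: not_is_unit0 Qi_nz.
  by move=> a b ua ub; rewrite /unit_at rmorphM; apply: is_unitM.
- move=> r t [v [tv vt]].
  have [c [a [Dc e]]] := comp_at_frac (comp_at i r * v).
  have /comp_at_ker [b [ub bk]] : comp_at i (c * r - a * t) = 0.
    by rewrite rmorphB !rmorphM -e -!mulrA vt mulr1 subrr.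
  exists (b * c), (b * a); split.
    by rewrite /unit_at rmorphM; apply: is_unitM ub (comp_at_D i Dc).
  by apply/eqP; rewrite -subr_eq0 -!mulrA -mulrBr bk.
- move=> r t ut rt0; apply: comp_at_ker; apply: (is_unit_rreg ut).
  by rewrite -rmorphM rt0 rmorph0.
Qed.

Lemma unit_at_inj i j : (forall a, unit_at i a -> unit_at j a) -> i = j.
Proof.
move=> sub; case: (eqVneq i j) => // ij.
have [b [ub b0]] := unit_at_support i.
have := sub b ub; rewrite /unit_at b0 1?eq_sym //.
by case: (Qi_simple_Artinian j) => [[nz _] _] /(not_is_unit0 nz).
Qed.

Lemma unit_at_localization i : is_left_localization (unit_at i) (comp_at i).
Proof.
split=> [//|]; split=> [x|r].
  by have [c [a [Dc e]]] := comp_at_frac x; exists c, a; split=> //; apply: comp_at_D.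
split; first exact: comp_at_ker.
by move=> [t [ut tr0]]; apply: (is_unit_lreg ut); rewrite -rmorphM tr0 rmorph0.
Qed.

Section DenominatorSet.
Variables (T : A -> Prop) (i : 'I_n).
Hypothesis T_den : left_den T.
Hypothesis T_nz : forall t, T t -> comp_at i t <> 0.

Let T1 : T 1. Proof. by case: T_den => [[[]]]. Qed.

Let TM a b : T a -> T b -> T (a * b).
Proof. by case: T_den => [[[_ [_ TM]] _] _]; apply: TM. Qed.

Let T_Ore r t : T t -> exists t' r', T t' /\ t' * r = r' * t.
Proof. by case: T_den => [[_ TO] _]; apply: TO. Qed.

Let T_cancel r t : T t -> r * t = 0 -> exists t', T t' /\ t' * r = 0.
Proof. by case: T_den => _ TD; apply: TD. Qed.

Definition killed (y : Qi i) : Prop := exists2 t, T t & comp_at i t * y = 0.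

Lemma killedB y z : killed y -> killed z -> killed (y - z).
Proof.
move=> [t1 Tt1 ty] [t2 Tt2 tz]; have [t' [r' [Tt' e]]] := T_Ore t2 Tt1.
exists (t' * t2); first exact: TM.
by rewrite mulrBr {1}e !rmorphM -!mulrA ty tz !mulr0 subrr.
Qed.

Lemma killed_mull a y : killed y -> killed (comp_at i a * y).
Proof.
move=> [t Tt ty]; have [t' [a' [Tt' e]]] := T_Ore a Tt.
by exists t' => //; rewrite mulrA -rmorphM e rmorphM -mulrA ty mulr0.
Qed.

Definition cleared (z : Qi i) : Prop := exists2 c, D c & killed (comp_at i c * z).

Lemma cleared0 : cleared 0.
Proof. by exists 1 => //; exists 1; rewrite // !mulr0. Qed.

Lemma clearedB y z : cleared y -> cleared z -> cleared (y - z).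
Proof.
move=> [c1 Dc1 ky] [c2 Dc2 kz]; have [v [c1v vc1]] := comp_at_D i Dc1.
have [d [b [Dd e]]] := comp_at_frac (comp_at i c2 * v).
have dc2 : comp_at i (d * c2) = comp_at i b * comp_at i c1.
  by rewrite rmorphM -e -!mulrA vc1 mulr1.
exists (d * c2); first exact: DM.
rewrite mulrBr {1}dc2 rmorphM -!mulrA.
by apply: killedB; apply: killed_mull.
Qed.

Lemma cleared_mull x z : cleared z -> cleared (x * z).
Proof.
move=> [c Dc kz]; have [v [cv vc]] := comp_at_D i Dc.
have [c' [a [Dc' e]]] := comp_at_frac (x * v).
exists c' => //; rewrite mulrA; suff -> : comp_at i c' * x = comp_at i a * comp_at i c.
  by rewrite -mulrA; apply: killed_mull.
by rewrite -e -!mulrA vc mulr1.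
Qed.

Lemma cleared_mulr x z : cleared z -> cleared (z * x).
Proof.
move=> [c Dc [t Tt tz]]; exists c => //; exists t => //.
by move: tz; rewrite !mulrA => ->; rewrite mul0r.
Qed.

Lemma cleared_ideal : ideal cleared.
Proof.
split; last exact: cleared_mulr.
by split; [exact: cleared0 | split; [exact: clearedB | exact: cleared_mull]].
Qed.

Lemma den_comp_lreg t y : T t -> comp_at i t * y = 0 -> y = 0.
Proof.
move=> Tt ty0; have [[_ Qi_simple] _] := Qi_simple_Artinian i.
have [cleared_0|cleared_all] := Qi_simple _ cleared_ideal.
  by apply: cleared_0; exists 1 => //; exists t; rewrite // rmorph1 mul1r.
have [c Dc [t' Tt' e]] := cleared_all 1.
case: (T_nz Tt'); apply: (is_unit_rreg (comp_at_D i Dc)).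
by rewrite -e mulr1.
Qed.

Lemma den_comp_unit t : T t -> unit_at i t.
Proof.
move=> Tt; apply: left_Artinian_rreg_unit; first by case: (Qi_simple_Artinian i).
move=> z zt0; have [c [a [Dc e]]] := comp_at_frac z.
have /comp_at_ker [b [ub bat0]] : comp_at i (a * t) = 0.
  by rewrite rmorphM -e -mulrA zt0 mulr0.
have [t' [Tt' t'ba]] : exists t', T t' /\ t' * (b * a) = 0.
  by apply: (@T_cancel (b * a) t Tt); rewrite -mulrA.
have ba0 : comp_at i (b * a) = 0.
  by apply: (den_comp_lreg Tt'); rewrite -rmorphM t'ba rmorph0.
apply: (is_unit_lreg (comp_at_D i Dc)); rewrite e.
by apply: (is_unit_lreg ub); rewrite -rmorphM.
Qed.

End DenominatorSet.

Lemma mul_closed_comp_eq0 (T : A -> Prop) :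
  T 1 -> (forall a b, T a -> T b -> T (a * b)) ->
  (forall i, exists2 t, T t & comp_at i t = 0) -> T 0.
Proof.
move=> T1 TM zero_at.
have upto k : exists2 t, T t & forall j : 'I_n, (j < k)%N -> comp_at j t = 0.
  elim: k => [|k [t Tt tk]]; first by exists 1.
  have [kn|nk] := ltnP k n; last first.
    by exists t => // j jk; apply: tk; apply: leq_trans (ltn_ord j) nk.
  have [t' Tt' t'0] := zero_at (Ordinal kn).
  exists (t' * t); first exact: TM.
  move=> j; rewrite ltnS leq_eqVlt rmorphM => /predU1P [jk|/tk ->]; last first.
    by rewrite mulr0.
  have -> : j = Ordinal kn by apply: val_inj.
  by rewrite t'0 mul0r.
have [t Tt t0] := upto n.
by rewrite -(comp_at_eq0 (a := t)) // => j; apply: t0.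
Qed.

Lemma left_den_sub_unit_at (T : A -> Prop) :
  left_den T -> exists i, forall a, T a -> unit_at i a.
Proof.
move=> T_den.
have [[i T_nz]|] := classic (exists i, forall t, T t -> comp_at i t <> 0).
  by exists i => a; apply: den_comp_unit T_den T_nz a.
move=> none; case: T_den => [[[T1 [T0 TM]] _] _]; case: T0.
apply: mul_closed_comp_eq0 T1 TM _ => i.
by apply: NNPP => no_t; apply: none; exists i => t Tt t0; apply: no_t; exists t.
Qed.

Lemma maxDen_unit_at (T : A -> Prop) :
  maxDen_l T <-> exists i, same_subset T (unit_at i).
Proof.
split=> [[T_den T_max]|[i Ti]].
  have [i Ti] := left_den_sub_unit_at T_den.
  by exists i => a; split=> [/Ti|]; [|apply: T_max (unit_at_den i) Ti a].
split; first by apply: left_den_same (unit_at_den i) => a; split=> /Ti.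
move=> U U_den TU; have [j Uj] := left_den_sub_unit_at U_den.
have ij : i = j by apply: unit_at_inj => a /Ti /TU /Uj.
by move=> a /Uj; rewrite -ij => /Ti.
Qed.

End FractionsInProduct.

Lemma maxDen_prod (Q : pzRingType) (n : nat) (Qi : 'I_n -> pzRingType)
    (phi : Q -> forall i, Qi i) (T : Q -> Prop) :
  ring_iso_prod phi -> (forall i, simple_Artinian (Qi i)) ->
  maxDen_l T <-> exists i, same_subset T (fun q => is_unit (phi q i)).
Proof.
move=> Hphi HQi.
apply: (maxDen_unit_at Hphi HQi (s := idfun) (D := fun q => q = 1)) => //.
- by move=> a b -> ->; rewrite mulr1.
- by move=> c ->; apply: is_unit1.
- by move=> q; exists 1, q; rewrite mul1r.
Qed.

Lemma tilde_preimage (R Q : pzRingType) (sigma : {rmorphism R -> Q})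
    (U : R -> Prop) (V : Q -> Prop) :
  is_classical_left_quotient sigma ->
  V 1 -> (forall a b, V a -> V b -> V (a * b)) -> (forall q, is_unit q -> V q) ->
  same_subset U (preimage_of sigma V) -> same_subset (tilde sigma U) V.
Proof.
move=> [s_unit [s_frac _]] V1 VM V_unit UV q; split.
  elim=> [|x y x_gen _ Vy]; first exact: V1.
  apply: VM Vy; case: x_gen => [[u [Uu ->]]|[c [_ [xc cx]]]]; first exact/UV.
  by apply: V_unit; exists (sigma c).
move=> Vq; have [c [a [rc e]]] := s_frac q; have [v [cv vc]] := s_unit c rc.
have -> : q = v * (sigma a * 1) by rewrite mulr1 -e mulrA vc mul1r.
apply: gm_mul; first by right; exists c.
apply: gm_mul; last exact: gm_one.
left; exists a; split=> //; apply/UV.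
by rewrite /preimage_of -e; apply: VM (V_unit _ (s_unit c rc)) Vq.
Qed.

Theorem corollary3p13 (R Q : pzRingType) (sigma : {rmorphism R -> Q})
  (n : nat) (Qi : 'I_n -> pzRingType) (phi : Q -> forall i, Qi i) :
  semiprime R -> left_Goldie R ->
  is_classical_left_quotient sigma ->
  ring_iso_prod phi ->
  (forall i, simple_Artinian (Qi i)) ->
  let S' := fun (i : 'I_n) (q : Q) => is_unit (phi q i) in
  let S := fun (i : 'I_n) => preimage_of sigma (S' i) in
  (* (1) *)
  (forall T : R -> Prop, maxDen_l T -> forall c, regular c -> T c) /\
  (* (2) *)
  (forall T : R -> Prop, maxDen_l T <-> exists i, same_subset T (S i)) /\
  (forall T : Q -> Prop, maxDen_l T <-> exists i, same_subset T (S' i)) /\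
  (forall T : R -> Prop, maxDen_l T ->
     maxDen_l (tilde sigma T) /\ same_subset (preimage_of sigma (tilde sigma T)) T) /\
  (forall T : Q -> Prop, maxDen_l T ->
     maxDen_l (preimage_of sigma T) /\ same_subset (tilde sigma (preimage_of sigma T)) T) /\
  (* (3) *)
  (forall i, exists f : {rmorphism R -> Qi i}, is_left_localization (S i) f).
Proof.
move=> _ _ sigma_quot Hphi HQi S' S.
have [s_unit [s_frac s_ker]] := sigma_quot.
have s_inj a : sigma a = 0 -> a = 0 by move/s_ker => [c [[c_lreg _] /c_lreg]].
have maxR :=
  maxDen_unit_at Hphi HQi (@regular1 R) (@regularM R) s_unit s_frac s_inj.
have maxQ T := maxDen_prod T Hphi HQi.
have tildeS U i : same_subset U (S i) -> same_subset (tilde sigma U) (S' i).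
  apply: tilde_preimage => //.
  - by rewrite /S' (phi1 Hphi); apply: is_unit1.
  - by move=> a b; rewrite /S' (phiM Hphi); apply: is_unitM.
  - by move=> q; apply: phi_unit.
split; last split; last split; last split; last split.
- by move=> T /maxR [i Ti] c c_reg; apply/Ti/phi_unit/s_unit.
- exact: maxR.
- exact: maxQ.
- move=> T /maxR [i Ti]; have Ti' := tildeS T i Ti.
  by split; [apply/maxQ; exists i | move=> r; split=> [/Ti' /Ti | /Ti /Ti']].
- move=> T /maxQ [i Ti].
  have Si : same_subset (preimage_of sigma T) (S i) by move=> r; apply: Ti.
  split; first by apply/maxR; exists i.
  by move=> q; split=> [/(tildeS _ _ Si) /Ti | /Ti /(tildeS _ _ Si)].
- move=> i; exists (comp_at Hphi sigma i).
  exact: unit_at_localization s_unit s_frac s_inj i.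
Qed.
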